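(* Let $\mathbf{A}$, $\mathbf{B}$ be $\sigma$-structures. The following are equivalent: (1) there exist matrices $P\in\mathbb{R}^{B\times A}$ and $Q\in\mathbb{R}^{\mathcal{C}_\mathbf{B}\times\mathcal{C}_\mathbf{A}}$, both doubly stochastic, such that for every $\ell\in\mathcal{L}_\sigma$ it holds that $P M^{\ell}_{\mathbf{A}}=M^{\ell}_{\mathbf{B}}Q$ and $M^{\ell}_{\mathbf{A}}Q^T=P^T M^{\ell}_{\mathbf{B}}$; (2) $\mathbf{A}$ and $\mathbf{B}$ have the same iterated degree sequence; (3) $\mathbf{A}$ and $\mathbf{B}$ have a common equitable partition. If, additionally, $\mathbf{A}$ and $\mathbf{B}$ are graphs, then the following is also equivalent to (1)–(3): (4) there exists a doubly stochastic matrix $P\in\mathbb{R}^{B\times A}$ such that $P N_{\mathbf{A}}=N_{\mathbf{B}}P$, where $N_\mathbf{A}$, $N_\mathbf{B}$ are the adjacency matrices of $\mathbf{A}$, $\mathbf{B}$.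
   Context: A signature $\sigma$ is a finite set of relation symbols $R$, each with an arity $\operatorname{ar}(R)\ge 1$. A $\sigma$-structure $\mathbf{A}$ consists of a finite universe $A$ and, for each $R\in\sigma$, a non-empty relation $R^{\mathbf{A}}\subseteq A^{\operatorname{ar}(R)}$. For a tuple $\mathbf{a}$, $a_i$ denotes its $i$-th entry and $\{\mathbf{a}\}$ the set of its entries. The constraint set of $\mathbf{A}$ is $\mathcal{C}_\mathbf{A}=\{R(\mathbf{a}) : R\in\sigma,\ \mathbf{a}\in R^{\mathbf{A}}\}$, where $R(\mathbf{a})$ are formal symbols. Let $\mathcal{L}_\sigma=\{(S,R): R\in\sigma,\ S\subseteq[\operatorname{ar}(R)]\}$. The factor graph of $\mathbf{A}$ is the bipartite graph with vertex set $A\cup\mathcal{C}_\mathbf{A}$ (disjoint union) and edges $\{a,R(\mathbf{a})\}$ whenever $a\in\{\mathbf{a}\}$; such an edge has label $(S,R)$ with $S=\{i: a_i=a\}$. Iterated degrees: $\delta^{\mathbf{A}}_0(v)$ is one of two fixed symbols according to whether $v\in A$ or $v\in\mathcal{C}_\mathbf{A}$; for $j\ge1$, $\delta^{\mathbf{A}}_j(v)$ is the multiset $\{\{(\ell_{\{v,w\}},\delta^{\mathbf{A}}_{j-1}(w)) : w \text{ adjacent to } v\}\}$ where $\ell_{\{v,w\}}$ is the edge label; $\delta^{\mathbf{A}}(v)=(\delta^{\mathbf{A}}_0(v),\delta^{\mathbf{A}}_1(v),\dots)$. The iterated degree sequence of $\mathbf{A}$ is the multiset $\{\{\delta^{\mathbf{A}}(v):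 v\in A\cup\mathcal{C}_\mathbf{A}\}\}$. The matrix $M_\mathbf{A}\in\mathcal{L}_\sigma^{A\times\mathcal{C}_\mathbf{A}}$ has $M_\mathbf{A}[a,R(\mathbf{a})]=(S,R)$ with $S=\{i\in[\operatorname{ar}(R)]: a_i=a\}$ (possibly $S=\emptyset$); for $\ell\in\mathcal{L}_\sigma$, $M^\ell_\mathbf{A}\in\{0,1\}^{A\times\mathcal{C}_\mathbf{A}}$ has entry $1$ exactly where $M_\mathbf{A}$ equals $\ell$. A doubly stochastic matrix is a non-negative matrix all of whose row sums and column sums equal $1$ (in particular its row and column index sets have the same size). A partition of $\mathbf{A}$ is a pair $(\{\mathcal{P}_i\}_{i\in I},\{\mathcal{Q}_j\}_{j\in J})$ of a partition of $A$ and a partition of $\mathcal{C}_\mathbf{A}$. It is equitable if there are integers $c^\ell_{i,j},d^\ell_{j,i}$ (the parameters) such that for all $i,j,\ell$: every $a\in\mathcal{P}_i$ satisfies $|\{R(\mathbf{a})\in\mathcal{Q}_j: M_\mathbf{A}[a,R(\mathbf{a})]=\ell\}|=c^\ell_{i,j}$, and every $R(\mathbf{a})\in\mathcal{Q}_j$ satisfies $|\{a\in\mathcal{P}_i: M_\mathbf{A}[a,R(\mathbf{a})]=\ell\}|=d^\ell_{j,i}$. Two structures $\mathbf{A},\mathbf{B}$ have a common equitable partition if they have equitable partitions $(\{\mathcal{P}^\mathbf{A}_i\}_{i\in I},\{\mathcal{Q}^\mathbf{A}_j\}_{j\in J})$, $(\{\mathcal{P}^\mathbf{B}_i\}_{i\in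 I},\{\mathcal{Q}^\mathbf{B}_j\}_{j\in J})$ with the same parameters and $|\mathcal{P}^\mathbf{A}_i|=|\mathcal{P}^\mathbf{B}_i|$, $|\mathcal{Q}^\mathbf{A}_j|=|\mathcal{Q}^\mathbf{B}_j|$ for all $i,j$. A graph is a structure whose signature consists of one binary relation symbol interpreted as a symmetric irreflexive relation. *)

From HB Require Import structures.
From mathcomp Require Import all_boot all_order all_algebra.
From mathcomp Require Import finmap multiset.
From mathcomp Require Import Rstruct.
Set Implicit Arguments. Unset Strict Implicit. Unset Printing Implicit Defensive.
Import Order.TTheory GRing.Theory Num.Theory.

Record signature := Signature {
  sym : finType;
  ar : sym -> nat;
  ar_pos : forall R, 0 < ar R }.

Record structure (s : signature) := Structure {
  univ : finType;
  rel : forall R : sym s, {set (ar R).-tuple univ};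
  rel_nonempty : forall R : sym s, rel R != set0 }.
Arguments univ {s}.
Arguments rel {s}.

Section Defs.
Variable s : signature.
Local Notation R := Rdefinitions.R.

Definition label : finType := {R : sym s & {set 'I_(ar R)}}.

Definition cons (A : structure s) : finType :=
  {c : {R : sym s & (ar R).-tuple (univ A)} | tagged c \in rel A (tag c)}.

Definition csym (A : structure s) (c : cons A) : sym s := tag (val c).
Definition ctup (A : structure s) (c : cons A) : (ar (csym c)).-tuple (univ A) :=
  tagged (val c).

(* M_A[a, R(a)] = (S, R) with S = {i | a_i = a} (possibly empty). *)
Definition Mlab (A : structure s) (a : univ A) (c : cons A) : label :=
  Tagged (fun R => {set 'I_(ar R)}) [set i | tnth (ctup c) i == a].

Definition Ml (A : structure s) (l : label) (a : univ A) (c : cons A) : R :=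
  ((Mlab a c == l)%:R)%R.

(* Matrices indexed by finite types, as functions; products as sums. *)
Definition doubly_stochastic (I J : finType) (P : I -> J -> R) : Prop :=
  (forall i j, 0 <= P i j)%R /\
  (forall i, (\sum_(j : J) P i j = 1)%R) /\
  (forall j, (\sum_(i : I) P i j = 1)%R).

Definition cond1 (A B : structure s) : Prop :=
  exists (P : univ B -> univ A -> R) (Q : cons B -> cons A -> R),
    doubly_stochastic P /\ doubly_stochastic Q /\
    forall l : label,
      (* P M^l_A = M^l_B Q  (entries indexed by B x C_A) *)
      (forall (b : univ B) (c : cons A),
         (\sum_(a : univ A) P b a * Ml l a c = \sum_(c' : cons B) Ml l b c' * Q c' c)%R) /\
      (* M^l_A Q^T = P^T M^l_B  (entries indexed by A x C_B) *)
      (forall (a : univ A) (c' : cons B),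
         (\sum_(c : cons A) Ml l a c * Q c' c = \sum_(b : univ B) P b a * Ml l b c')%R).

(* Vertices of the factor graph: A disjoint-union C_A. *)
Definition vert (A : structure s) : finType := (univ A + cons A)%type.

(* Types of iterated degrees: delta_0 is a bool (element vs constraint),
   delta_{j+1} is a finite multiset of pairs (edge label, delta_j). *)
Fixpoint degT (j : nat) : choiceType :=
  match j with
  | 0 => bool
  | j'.+1 => ({mset (label * degT j')%type})%mset
  end.

Definition nbrs (A : structure s) (j : nat) (d : vert A -> degT j) (v : vert A)
  : seq (label * degT j) :=
  match v with
  | inl a => [seq (Mlab a c, d (inr c)) | c <- enum (cons A) & a \in (ctup c : seq _)]
  | inr c => [seq (Mlab a c, d (inl a)) | a <- enum (univ A) & a \in (ctup c : seq _)]
  end.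

Fixpoint deg (A : structure s) (j : nat) : vert A -> degT j :=
  match j return vert A -> degT j with
  | 0 => fun v => if v is inl _ then true else false
  | j'.+1 => fun v => seq_mset (nbrs (@deg A j') v)
  end.
Arguments deg A j v : clear implicits.

(* Condition (2): equal iterated degree sequences, i.e. the multisets
   {{ delta(v) : v in A + C_A }} and {{ delta(w) : w in B + C_B }} of infinite
   sequences coincide: there is a bijection matching vertices with equal
   delta (all coordinates j). *)
Definition cond2 (A B : structure s) : Prop :=
  exists f : vert A -> vert B, bijective f /\
    forall (v : vert A) (j : nat), deg B j (f v) = deg A j v.

(* Equitable partition with given parameters; partitions into blocks indexed
   by 'I_n and 'I_m, given by block-assignment maps. *)
Definition is_partition (T : finType) (n : nat) (p : T -> 'I_n) : Prop :=
  forall i, exists x, p x = i.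

Definition equitable_with (A : structure s) (n m : nat)
  (p : univ A -> 'I_n) (q : cons A -> 'I_m)
  (c : label -> 'I_n -> 'I_m -> nat) (d : label -> 'I_m -> 'I_n -> nat) : Prop :=
  (forall l i j (a : univ A), p a = i ->
      #|[set x : cons A | (q x == j) && (Mlab a x == l)]| = c l i j) /\
  (forall l i j (x : cons A), q x = j ->
      #|[set a : univ A | (p a == i) && (Mlab a x == l)]| = d l j i).

Definition cond3 (A B : structure s) : Prop :=
  exists (n m : nat) (pA : univ A -> 'I_n) (qA : cons A -> 'I_m)
         (pB : univ B -> 'I_n) (qB : cons B -> 'I_m) c d,
    is_partition pA /\ is_partition qA /\ is_partition pB /\ is_partition qB /\
    equitable_with pA qA c d /\ equitable_with pB qB c d /\
    (forall i, #|[set a | pA a == i]| = #|[set b | pB b == i]|) /\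
    (forall j, #|[set x | qA x == j]| = #|[set y | qB y == j]|).

(* Graphs: one binary symbol, interpreted symmetric and irreflexive. *)
Definition is_graph (A : structure s) : Prop :=
  #|sym s| = 1 /\
  forall R : sym s, ar R = 2 /\
    (forall t, t \in rel A R -> uniq t) /\
    (forall t, t \in rel A R -> [exists t' in rel A R, val t' == rev t]).

Definition adj (A : structure s) (a b : univ A) : R :=
  ([exists R : sym s, [exists t in rel A R, val t == [:: a; b]]])%:R%R.

Definition cond4 (A B : structure s) : Prop :=
  exists P : univ B -> univ A -> R, doubly_stochastic P /\
    forall (b : univ B) (a : univ A),
      (\sum_(a' : univ A) P b a' * adj a' a = \sum_(b' : univ B) adj b b' * P b' a)%R.

End Defs.

From Pilot Require Import Defs.
From mathcomp Require Import all_boot all_order all_algebra.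
From mathcomp Require Import finmap multiset Rstruct ring.
From Stdlib Require Import Classical.

(* If P is doubly stochastic, P u = v and P^T v = u force u x = v y whenever
   P y x > 0, since the quadratic form sum P y x (u x - v y)^2 vanishes.  Given
   (1), the vectors M^l chi, where chi is the indicator of a connected component
   of the support of Q (resp. P), are swapped in this way by P (resp. Q), so the
   components of the supports of P and Q form a common equitable partition (3).
   Conversely, the block-uniform matrices of a common equitable partition
   satisfy (1) by double counting.  Equitability makes iterated degrees constant
   on classes, giving (2); and the partition by iterated degree at a depth where
   it has stabilised is equitable, giving (3).  For graphs, the adjacency matrix
   is M^{src} (M^{dst})^T, whence (1) implies (4); and from (4) the components
   of the support of P, together with their pairs on edges, form a common
   equitable partition. *)

Set Implicit Arguments. Unset Strict Implicit. Unset Printing Implicit Defensive.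
Import Order.TTheory GRing.Theory Num.Theory.

Local Notation R := Rdefinitions.R.
Local Arguments deg {s} A j v.

Lemma card_set_sum (T : finType) (P : pred T) : #|[set x | P x]| = \sum_x P x.
Proof. by rewrite -sum1dep_card big_mkcond; apply: eq_bigr => x _; case: (P x). Qed.

Lemma card_set_partition (T K : finType) (q : T -> K) (P : pred T) (h : pred K) :
  #|[set x | P x && h (q x)]| = \sum_(k | h k) #|[set x | (q x == k) && P x]|.
Proof.
rewrite -sum1dep_card (partition_big q h) /= => [|x /andP[]//].
apply: eq_bigr => k hk; rewrite -sum1dep_card; apply: eq_bigl => x.
by case: eqP => [->|]; rewrite ?hk ?andbT ?andbF.
Qed.

Definition eq_fibre_card (X Y : finType) (K : eqType) (kX : X -> K) (kY : Y -> K) :=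
  forall k, #|[set x | kX x == k]| = #|[set y | kY y == k]|.

Section Fibres.
Variables (X Y : finType) (K : eqType) (kX : X -> K) (kY : Y -> K).
Hypothesis fibXY : eq_fibre_card kX kY.

Lemma eq_fibre_card_sym : eq_fibre_card kY kX.
Proof. by move=> k; rewrite fibXY. Qed.

Lemma fibre_hit x : exists y, kY y = kX x.
Proof.
have /card_gt0P[y] : 0 < #|[set y | kY y == kX x]|.
  by rewrite -fibXY card_gt0; apply/set0Pn; exists x; rewrite inE.
by rewrite inE => /eqP; exists y.
Qed.

Lemma fibre_inj : exists2 f : X -> Y, injective f & forall x, kY (f x) = kX x.
Proof.
(* [f] maps the i-th element of each fibre of [kX] to the i-th element of the
   corresponding fibre of [kY]. *)
pose sX k := enum [set x | kX x == k]; pose sY k := enum [set y | kY y == k].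
have [y0 ky0] := fin_all_exists fibre_hit.
pose f x := nth (y0 x) (sY (kX x)) (index x (sX (kX x))).
have lt_index x : index x (sX (kX x)) < size (sY (kX x)).
  by rewrite -cardE -fibXY cardE index_mem mem_enum inE.
have kf x : kY (f x) = kX x.
  by have := mem_nth (y0 x) (lt_index x); rewrite mem_enum inE => /eqP.
exists f => // x1 x2 eqf; have ek : kX x1 = kX x2 by rewrite -!kf eqf.
have lt1 := lt_index x1; have lt2 := lt_index x2.
rewrite /f ek in eqf lt1.
have : index x1 (sX (kX x2)) = index x2 (sX (kX x2)).
  apply/eqP; rewrite -(nth_uniq (y0 x2) lt1 lt2) ?enum_uniq //.
  by rewrite -eqf (set_nth_default (y0 x1)).
have mem x : x \in sX (kX x) by rewrite mem_enum inE.
by move/(congr1 (nth x1 (sX (kX x2)))); rewrite !nth_index ?mem // -ek mem.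
Qed.

End Fibres.

Lemma fibre_bij (X Y : finType) (K : eqType) (kX : X -> K) (kY : Y -> K) :
  eq_fibre_card kX kY -> exists2 f : X -> Y, bijective f & forall x, kY (f x) = kX x.
Proof.
move=> fibXY; have [f f_inj kf] := fibre_inj fibXY.
have [g g_inj _] := fibre_inj (eq_fibre_card_sym fibXY).
by exists f; first exact: inj_card_bij f_inj (leq_card g g_inj).
Qed.

Lemma bij_eq_fibre_card (X Y : finType) (K : eqType) (kX : X -> K) (kY : Y -> K) (f : X -> Y) :
  bijective f -> (forall x, kY (f x) = kX x) -> eq_fibre_card kX kY.
Proof.
move=> [g fK gK] kf k; rewrite -(card_imset _ (can_inj fK)); apply: eq_card => y.
rewrite inE -{2}[y]gK kf; apply/imsetP/idP => [[x + ->]|]; first by rewrite inE fK.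
by exists (g y); rewrite ?inE ?gK.
Qed.

(** * Matrices as functions on finite types *)

Section FunMatrices.
Local Open Scope ring_scope.

Definition mulf (X Y Z : finType) (M : X -> Y -> R) (N : Y -> Z -> R) : X -> Z -> R :=
  fun x z => \sum_y M x y * N y z.
Definition trf (X Y : Type) (M : X -> Y -> R) : Y -> X -> R := fun y x => M x y.
Definition appf (X Y : finType) (M : X -> Y -> R) (u : Y -> R) : X -> R :=
  fun x => \sum_y M x y * u y.

Variables X Y Z W : finType.

Lemma mulfA (M : X -> Y -> R) (N : Y -> Z -> R) (O : Z -> W -> R) :
  mulf (mulf M N) O =2 mulf M (mulf N O).
Proof.
move=> x w; rewrite /mulf; under eq_bigr do rewrite mulr_suml.
rewrite exchange_big; apply: eq_bigr => y _; rewrite mulr_sumr.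
by apply: eq_bigr => z _; rewrite mulrA.
Qed.

Lemma mulf_trC (M : X -> Y -> R) (N : Y -> Z -> R) x z :
  mulf M N x z = mulf (trf N) (trf M) z x.
Proof. by apply: eq_bigr => y _; rewrite mulrC. Qed.

Lemma appf_mulf (M : X -> Y -> R) (N : Y -> Z -> R) (u : Z -> R) :
  appf (mulf M N) u =1 appf M (appf N u).
Proof.
move=> x; rewrite /appf; under eq_bigr do rewrite mulr_suml.
rewrite exchange_big; apply: eq_bigr => y _; rewrite mulr_sumr.
by apply: eq_bigr => z _; rewrite mulrA.
Qed.

Lemma eq_mulfl (M M' : X -> Y -> R) (N : Y -> Z -> R) :
  M =2 M' -> mulf M N =2 mulf M' N.
Proof. by move=> eqM x z; apply: eq_bigr => y _; rewrite eqM. Qed.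

Lemma eq_mulfr (M : X -> Y -> R) (N N' : Y -> Z -> R) :
  N =2 N' -> mulf M N =2 mulf M N'.
Proof. by move=> eqN x z; apply: eq_bigr => y _; rewrite eqN. Qed.

Lemma eq_appfl (M M' : X -> Y -> R) (u : Y -> R) : M =2 M' -> appf M u =1 appf M' u.
Proof. by move=> eqM x; apply: eq_bigr => y _; rewrite eqM. Qed.

Lemma eq_appfr (M : X -> Y -> R) (u u' : Y -> R) : u =1 u' -> appf M u =1 appf M u'.
Proof. by move=> equ x; apply: eq_bigr => y _; rewrite equ. Qed.

End FunMatrices.

(** * Doubly stochastic matrices *)

Section DoublyStochastic.
Local Open Scope ring_scope.

Definition intertwines (X Y X' Y' : finType) (P : Y -> X -> R) (Q : Y' -> X' -> R)
    (MA : X -> X' -> R) (MB : Y -> Y' -> R) :=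
  mulf P MA =2 mulf MB Q /\ mulf MA (trf Q) =2 mulf (trf P) MB.

Definition coupled (X Y : finType) (P : Y -> X -> R) (u : X -> R) (v : Y -> R) :=
  appf P u =1 v /\ appf (trf P) v =1 u.

Definition fibre_ind (T : Type) (K : eqType) (k : T -> K) (i : K) : T -> R :=
  fun t => (k t == i)%:R.

Lemma intertwines_tr (X Y X' Y' : finType) (P : Y -> X -> R) (Q : Y' -> X' -> R)
    (MA : X -> X' -> R) (MB : Y -> Y' -> R) :
  intertwines P Q MA MB -> intertwines Q P (trf MA) (trf MB).
Proof.
case=> PM MQ; split=> [y x | x' y].
  by rewrite mulf_trC MQ mulf_trC.
by rewrite mulf_trC PM mulf_trC.
Qed.

Lemma intertwines_coupled (X Y X' Y' : finType) (P : Y -> X -> R) (Q : Y' -> X' -> R)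
    (MA : X -> X' -> R) (MB : Y -> Y' -> R) (u : X' -> R) (v : Y' -> R) :
  intertwines P Q MA MB -> coupled Q u v -> coupled P (appf MA u) (appf MB v).
Proof.
case=> PM MQ [Qu Qv]; split=> z.
  by rewrite -appf_mulf (eq_appfl _ PM) appf_mulf (eq_appfr _ Qu).
by rewrite -appf_mulf -(eq_appfl _ MQ) appf_mulf (eq_appfr _ Qv).
Qed.

Variables (X Y : finType) (P : Y -> X -> R).
Hypothesis dsP : doubly_stochastic P.

Lemma ds_entry_cases y x : P y x = 0 \/ 0 < P y x.
Proof.
by case: dsP => P0 _; move: (P0 y x); rewrite le_eqVlt => /orP[/eqP<-|]; [left|right].
Qed.

Lemma ds_coupled_of_support (u : X -> R) (v : Y -> R) :
  (forall x y, 0 < P y x -> u x = v y) -> coupled P u v.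
Proof.
case: dsP => _ [Prow Pcol] uv; split=> [y | x].
  rewrite /appf -[RHS]mul1r -(Prow y) mulr_suml; apply: eq_bigr => x _.
  by case: (ds_entry_cases y x) => [->|/uv->]; rewrite ?mul0r.
rewrite /appf -[RHS]mul1r -(Pcol x) mulr_suml; apply: eq_bigr => y _ /=.
rewrite /trf; case: (ds_entry_cases y x) => [->|/uv->]; by rewrite ?mul0r.
Qed.

(* The form [sum_(y,x) P y x (u x - v y)^2] equals both [sum u^2 - sum v^2]
   and its opposite. *)
Lemma ds_coupled_support (u : X -> R) (v : Y -> R) x y :
  coupled P u v -> 0 < P y x -> u x = v y.
Proof.
case: dsP => P0 [Prow Pcol] [Pu Pv] Pyx.
have sq_u : \sum_y \sum_x P y x * u x ^+ 2 = \sum_x u x ^+ 2.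
  by rewrite exchange_big; apply: eq_bigr => x' _; rewrite -mulr_suml Pcol mul1r.
have sq_v : \sum_y \sum_x P y x * v y ^+ 2 = \sum_y v y ^+ 2.
  by apply: eq_bigr => y' _; rewrite -mulr_suml Prow mul1r.
have cross_v : \sum_y \sum_x P y x * (u x * v y) = \sum_y v y ^+ 2.
  apply: eq_bigr => y' _; rewrite expr2 -{2}(Pu y') mulr_suml.
  by apply: eq_bigr => x' _; rewrite mulrA.
have cross_u : \sum_y \sum_x P y x * (u x * v y) = \sum_x u x ^+ 2.
  rewrite exchange_big; apply: eq_bigr => x' _; rewrite expr2 -{3}(Pv x') mulr_sumr.
  by apply: eq_bigr => y' _; rewrite mulrCA.
have : \sum_y \sum_x P y x * (u x - v y) ^+ 2 = 0.
  transitivity (\sum_y \sum_x (P y x * u x ^+ 2 + P y x * v y ^+ 2)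
                - (\sum_y \sum_x P y x * (u x * v y)) *+ 2).
    rewrite -sumrMnl -sumrB; apply: eq_bigr => y' _; rewrite -sumrMnl -sumrB.
    by apply: eq_bigr => x' _; ring.
  rewrite (eq_bigr _ (fun y' _ => big_split _ _ _ _ _)) big_split /=.
  by rewrite sq_u sq_v mulr2n {1}cross_u cross_v; ring.
have sq_ge0 y' x' : 0 <= P y' x' * (u x' - v y') ^+ 2 by rewrite mulr_ge0 ?sqr_ge0.
move/eqP; rewrite psumr_eq0 => [/allP/(_ y (mem_index_enum _))|y' _]; last first.
  exact: sumr_ge0.
rewrite psumr_eq0 // => /allP/(_ x (mem_index_enum _)).
by rewrite mulf_eq0 gt_eqF //= sqrf_eq0 subr_eq0 => /eqP.
Qed.

Lemma coupled_sum (u : X -> R) (v : Y -> R) : coupled P u v -> \sum_x u x = \sum_y v y.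
Proof.
case: dsP => _ [Prow _] [_ Pv]; rewrite -(eq_bigr _ (fun x _ => Pv x)) exchange_big.
by apply: eq_bigr => y _; rewrite -mulr_suml Prow mul1r.
Qed.

Definition support_rel : rel (X + Y) := fun z z' =>
  match z, z' with inl x, inr y | inr y, inl x => 0 < P y x | _, _ => false end.

Definition colcomp x := fingraph.root support_rel (inl x).
Definition rowcomp y := fingraph.root support_rel (inr y).

Lemma support_connect_sym : connect_sym support_rel.
Proof. by apply: sym_connect_sym; case=> [x|y] [x'|y']. Qed.

Lemma comp_support x y : 0 < P y x -> colcomp x = rowcomp y.
Proof. by move=> Pyx; apply/(fingraph.rootP support_connect_sym)/connect1. Qed.

Lemma comp_const (T : eqType) (u : X -> T) (v : Y -> T) :
  (forall x y, 0 < P y x -> u x = v y) -> forall x y, colcomp x = rowcomp y -> u x = v y.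
Proof.
move=> uv x y /(fingraph.rootP support_connect_sym).
pose w z := match z with inl x' => u x' | inr y' => v y' end.
have w_closed : closed support_rel [pred z | w z == u x].
  by move=> [x'|y'] [x''|y''] //= /uv; rewrite !inE /w => ->.
by move/(closed_connect w_closed); rewrite !inE eqxx => /esym/eqP.
Qed.

Lemma coupled_comp_const (u : X -> R) (v : Y -> R) :
  coupled P u v -> forall x y, colcomp x = rowcomp y -> u x = v y.
Proof. by move=> Puv; apply: comp_const => x y; apply: ds_coupled_support. Qed.

Lemma comp_coupled k : coupled P (fibre_ind colcomp k) (fibre_ind rowcomp k).
Proof. by apply: ds_coupled_of_support => x y /comp_support; rewrite /fibre_ind => ->. Qed.

Lemma comp_fibre_card : eq_fibre_card colcomp rowcomp.
Proof.
move=> k; apply/eqP; rewrite -(eqr_nat R) !card_set_sum !natr_sum; apply/eqP.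
exact: coupled_sum (comp_coupled k).
Qed.

End DoublyStochastic.

(** * Equitable partitions *)

Lemma card_set_condE (T : finType) (P Q : pred T) :
  #|[set x | P x && Q x]| = \sum_(x | P x) Q x.
Proof. by rewrite card_set_sum [RHS]big_mkcond; apply: eq_bigr => x _; case: (P x). Qed.

Lemma ord_keys (X Y : finType) (K : eqType) (kX : X -> K) (kY : Y -> K) :
  eq_fibre_card kX kY ->
  exists n (key : 'I_n -> K) (pX : X -> 'I_n) (pY : Y -> 'I_n),
    [/\ forall x i, (pX x == i) = (kX x == key i),
        forall y i, (pY y == i) = (kY y == key i),
        is_partition pX & is_partition pY].
Proof.
move=> fibXY; pose L := undup (map kX (enum X)).
have kX_L x : kX x \in L by rewrite mem_undup map_f ?mem_enum.
have kY_L y : kY y \in L by have [x <-] := fibre_hit (eq_fibre_card_sym fibXY) y.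
pose key (i : 'I_(size L)) := tnth (in_tuple L) i.
have ltL k : k \in L -> index k L < size L by rewrite index_mem.
have keyE k (kL : k \in L) i : (Ordinal (ltL k kL) == i) = (k == key i).
  rewrite /key (tnth_nth k) -val_eqE /=; apply/eqP/eqP => [<-|->]; first by rewrite nth_index.
  by rewrite index_uniq ?undup_uniq.
have hit (i : 'I_(size L)) : exists x, kX x = key i.
  have /mapP[x _ kx] : key i \in map kX (enum X) by rewrite -mem_undup mem_tnth.
  by exists x.
exists (size L), key, (fun x => Ordinal (ltL _ (kX_L x))).
exists (fun y => Ordinal (ltL _ (kY_L y))).
split=> [x i | y i | i | i]; rewrite ?keyE //; have [x kx] := hit i; last first.
  have [y ky] := fibre_hit fibXY x; exists y; apply/eqP; by rewrite keyE ky kx.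
by exists x; apply/eqP; rewrite keyE kx.
Qed.

Section Counts.
Variable s : signature.
Local Open Scope ring_scope.

Definition cons_count (A : structure s) (K : eqType) (q : cons A -> K) (a : univ A)
    (l : label s) (j : K) : nat :=
  #|[set x | (q x == j) && (Mlab a x == l)]|.

Definition elt_count (A : structure s) (K : eqType) (p : univ A -> K) (x : cons A)
    (l : label s) (i : K) : nat :=
  #|[set a | (p a == i) && (Mlab a x == l)]|.

Lemma cons_countE (A : structure s) (K : eqType) (q : cons A -> K) a l j :
  (cons_count q a l j)%:R = \sum_x Ml l a x * (q x == j)%:R.
Proof.
rewrite /cons_count card_set_sum natr_sum; apply: eq_bigr => x _.
by rewrite /Ml -natrM mulnb andbC.
Qed.

Lemma elt_countE (A : structure s) (K : eqType) (p : univ A -> K) x l i :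
  (elt_count p x l i)%:R = \sum_a Ml l a x * (p a == i)%:R.
Proof.
rewrite /elt_count card_set_sum natr_sum; apply: eq_bigr => a _.
by rewrite /Ml -natrM mulnb andbC.
Qed.

Lemma equitable_double_count (A : structure s) n m (p : univ A -> 'I_n)
    (q : cons A -> 'I_m) c d :
  equitable_with p q c d ->
  forall l i j, (#|[set a | p a == i]| * c l i j = #|[set x | q x == j]| * d l j i)%N.
Proof.
case=> cE dE l i j; rewrite -!sum_nat_cond_const.
transitivity (\sum_(a | p a == i) \sum_(x | q x == j) (Mlab a x == l) : nat)%N.
  by apply: eq_bigr => a /eqP pa; rewrite -(cE l i j a pa) card_set_condE.
rewrite exchange_big; apply: eq_bigr => x /eqP qx.
by rewrite -(dE l i j x qx) card_set_condE.
Qed.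

Lemma cond3_of_keys (A B : structure s) (KP KQ : eqType)
    (pA : univ A -> KP) (qA : cons A -> KQ) (pB : univ B -> KP) (qB : cons B -> KQ) :
  eq_fibre_card pA pB -> eq_fibre_card qA qB ->
  (forall a b, pA a = pB b -> forall l j, cons_count qA a l j = cons_count qB b l j) ->
  (forall x y, qA x = qB y -> forall l i, elt_count pA x l i = elt_count pB y l i) ->
  cond3 A B.
Proof.
move=> fibP fibQ crossP crossQ.
have [n [keyP [pA' [pB' [pAE pBE sA sB]]]]] := ord_keys fibP.
have [m [keyQ [qA' [qB' [qAE qBE sqA sqB]]]]] := ord_keys fibQ.
have [repP repPE] := fin_all_exists sA; have [repQ repQE] := fin_all_exists sqA.
have keyPE a : pA a = keyP (pA' a) by apply/eqP; rewrite -pAE.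
have keyQE x : qA x = keyQ (qA' x) by apply/eqP; rewrite -qAE.
have withinP a a' : pA a = pA a' -> forall l j, cons_count qA a l j = cons_count qA a' l j.
  move=> aa' l j; have [b pb] := fibre_hit fibP a.
  by rewrite (crossP a b (esym pb)) (crossP a' b) // pb aa'.
have withinQ x x' : qA x = qA x' -> forall l i, elt_count pA x l i = elt_count pA x' l i.
  move=> xx' l i; have [y qy] := fibre_hit fibQ x.
  by rewrite (crossQ x y (esym qy)) (crossQ x' y) // qy xx'.
pose c l i j := cons_count qA (repP i) l (keyQ j).
pose d l j i := elt_count pA (repQ j) l (keyP i).
exists n, m, pA', qA', pB', qB', c, d; do 4 split=> //.
split; [split=> l i j | split; [split=> l i j | split=> [i|j]]].
- move=> a <-; transitivity (cons_count qA a l (keyQ j)).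
    by apply: eq_card => x; rewrite !inE qAE.
  by apply: withinP; rewrite !keyPE repPE.
- move=> x <-; transitivity (elt_count pA x l (keyP i)).
    by apply: eq_card => a; rewrite !inE pAE.
  by apply: withinQ; rewrite !keyQE repQE.
- move=> b /eqP; rewrite pBE => /eqP pb; transitivity (cons_count qB b l (keyQ j)).
    by apply: eq_card => y; rewrite !inE qBE.
  by rewrite /c -(crossP (repP i) b) // keyPE repPE pb.
- move=> y /eqP; rewrite qBE => /eqP qy; transitivity (elt_count pB y l (keyP i)).
    by apply: eq_card => b; rewrite !inE pBE.
  by rewrite /d -(crossQ (repQ j) y) // keyQE repQE qy.
- rewrite (eq_card (B := [set a | pA a == keyP i])) ?fibP; last by move=> a; rewrite !inE pAE.
  by apply: eq_card => b; rewrite !inE pBE.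
- rewrite (eq_card (B := [set x | qA x == keyQ j])) ?fibQ; last by move=> x; rewrite !inE qAE.
  by apply: eq_card => y; rewrite !inE qBE.
Qed.

Lemma cond3_of_cond1 (A B : structure s) : cond1 A B -> cond3 A B.
Proof.
case=> P [Q [dsP [dsQ PQ]]].
apply: (cond3_of_keys (comp_fibre_card dsP) (comp_fibre_card dsQ)).
- move=> a b ab l j; apply/eqP; rewrite -(eqr_nat R) !cons_countE; apply/eqP.
  exact (coupled_comp_const dsP (intertwines_coupled (PQ l) (comp_coupled dsQ j)) ab).
- move=> x y xy l i; apply/eqP; rewrite -(eqr_nat R) !elt_countE; apply/eqP.
  exact (coupled_comp_const dsQ
    (intertwines_coupled (intertwines_tr (PQ l)) (comp_coupled dsP i)) xy).
Qed.

End Counts.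

Lemma fibre_card_gt0 (T : finType) (K : eqType) (k : T -> K) t :
  (0 < #|[set t' | k t' == k t]|)%N.
Proof. by apply/card_gt0P; exists t; rewrite inE. Qed.

Section Uniform.
Local Open Scope ring_scope.
Variables (X Y : finType) (K : eqType) (kX : X -> K) (kY : Y -> K).

Definition unif : Y -> X -> R :=
  fun y x => (kX x == kY y)%:R / #|[set y' | kY y' == kY y]|%:R.

Lemma unifE y x : unif y x = (kY y == kX x)%:R / #|[set y' | kY y' == kX x]|%:R.
Proof. by rewrite /unif eq_sym; case: eqP => [->|]; rewrite ?mul0r. Qed.

Lemma mulf_unif_l (Z : finType) (M : X -> Z -> R) y z :
  mulf unif M y z = (\sum_x M x z * (kX x == kY y)%:R) / #|[set y' | kY y' == kY y]|%:R.
Proof. by rewrite /mulf mulr_suml; apply: eq_bigr => x _; rewrite /unif mulrC mulrA. Qed.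

Lemma mulf_tr_unif_r (Z : finType) (M : Z -> X -> R) z y :
  mulf M (trf unif) z y =
  (\sum_x M z x * (kX x == kY y)%:R) / #|[set y' | kY y' == kY y]|%:R.
Proof. by rewrite /mulf mulr_suml; apply: eq_bigr => x _; rewrite /trf /unif mulrA. Qed.

Lemma mulf_unif_r (Z : finType) (M : Z -> Y -> R) z x :
  mulf M unif z x = (\sum_y M z y * (kY y == kX x)%:R) / #|[set y' | kY y' == kX x]|%:R.
Proof. by rewrite /mulf mulr_suml; apply: eq_bigr => y _; rewrite unifE mulrA. Qed.

Lemma mulf_tr_unif_l (Z : finType) (M : Y -> Z -> R) x z :
  mulf (trf unif) M x z =
  (\sum_y M y z * (kY y == kX x)%:R) / #|[set y' | kY y' == kX x]|%:R.
Proof. by rewrite /mulf mulr_suml; apply: eq_bigr => y _; rewrite /trf unifE mulrC mulrA. Qed.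

Hypothesis fibXY : eq_fibre_card kX kY.

Lemma unif_ds : doubly_stochastic unif.
Proof.
have fibre_neq0 x : #|[set y | kY y == kX x]|%:R != 0 :> R.
  by rewrite pnatr_eq0 -fibXY -lt0n fibre_card_gt0.
split; first by move=> y x; rewrite divr_ge0 ?ler0n.
split=> [y | x].
  rewrite -mulr_suml -natr_sum -card_set_sum fibXY.
  by rewrite divff // pnatr_eq0 -lt0n fibre_card_gt0.
by rewrite (eq_bigr _ (fun y _ => unifE y x)) -mulr_suml -natr_sum -card_set_sum divff.
Qed.

End Uniform.

Lemma cond1_of_cond3 (s : signature) (A B : structure s) : cond3 A B -> cond1 A B.
Proof.
case=> n [m [pA [qA [pB [qB [c [d [_ [_ [_ [_ [[cA dA] [eqB [fibP fibQ]]]]]]]]]]]]]].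
have [cB dB] := eqB.
have ratio l i j : (0 < #|[set b | pB b == i]|)%N -> (0 < #|[set y | qB y == j]|)%N ->
    ((d l j i)%:R / #|[set b | pB b == i]|%:R
     = (c l i j)%:R / #|[set y | qB y == j]|%:R :> R)%R.
  move=> Pi Qj; apply/eqP; rewrite eqr_div ?pnatr_eq0 -?lt0n // -!natrM eqr_nat.
  by rewrite mulnC -(equitable_double_count eqB) mulnC.
exists (unif pA pB), (unif qA qB); split; first exact: unif_ds.
split; first exact: unif_ds.
move=> l; split=> [b x | a y].
- rewrite -[LHS]/(mulf (unif pA pB) (Ml l) b x) -[RHS]/(mulf (Ml l) (unif qA qB) b x).
  rewrite mulf_unif_l mulf_unif_r -elt_countE -cons_countE /elt_count /cons_count.
  rewrite (dA l (pB b) (qA x) x erefl) (cB l (pB b) (qA x) b erefl).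
  by apply: ratio; rewrite ?fibre_card_gt0 // -fibQ fibre_card_gt0.
- rewrite -[LHS]/(mulf (Ml l) (trf (unif qA qB)) a y).
  rewrite -[RHS]/(mulf (trf (unif pA pB)) (Ml l) a y).
  rewrite mulf_tr_unif_r mulf_tr_unif_l -elt_countE -cons_countE /elt_count /cons_count.
  rewrite (cA l (pA a) (qB y) a erefl) (dB l (pA a) (qB y) y erefl).
  by symmetry; apply: ratio; rewrite ?fibre_card_gt0 // -fibP fibre_card_gt0.
Qed.

(** * Iterated degrees *)

Lemma factor_through (T1 T2 : finType) n (f1 : T1 -> 'I_n) (f2 : T2 -> 'I_n) (U : Type)
    (u1 : T1 -> U) (u2 : T2 -> U) :
  is_partition f1 -> is_partition f2 -> (forall x y, f1 x = f2 y -> u1 x = u2 y) ->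
  exists g : 'I_n -> U, (forall x, u1 x = g (f1 x)) /\ (forall y, u2 y = g (f2 y)).
Proof.
move=> sf1 sf2 u12; have [rep repE] := fin_all_exists sf2.
exists (fun i => u2 (rep i)); split=> [x | y]; first by apply: u12; rewrite repE.
by have [x fx] := sf1 (f2 y); rewrite -(u12 x y) // (u12 x (rep (f2 y))) ?repE.
Qed.

Lemma card_set_andl (T : finType) (b : bool) (P : pred T) :
  #|[set x | b && P x]| = b * #|[set x | P x]|.
Proof. by case: b; rewrite ?mul1n ?mul0n // card_set_sum big1. Qed.

Lemma card_set_andN (T : finType) (P Q : pred T) :
  #|[set x | P x && ~~ Q x]| = #|[set x | P x]| - #|[set x | P x && Q x]|.
Proof.
rewrite (eq_card (B := [set x | P x] :\: [set x | Q x])) ?cardsD.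
  by congr (_ - _); apply: eq_card => x; rewrite !inE.
by move=> x; rewrite !inE andbC.
Qed.

Lemma label_eq_empty (s : signature) (u v : label s) :
  tag u = tag v -> tagged u == set0 -> tagged v == set0 -> u = v.
Proof. by case: u v => [r S] [r' S'] /= er; subst r' => /eqP -> /eqP ->. Qed.

Section Neighbourhoods.
Variables (s : signature) (A : structure s) (j : nat) (d : vert A -> degT s j).

Lemma mem_ctupE (a : univ A) (x : cons A) :
  (a \in (ctup x : seq _)) = (tagged (Mlab a x) != set0).
Proof.
apply/tnthP/set0Pn => [[i ->]|[i]]; first by exists i; rewrite inE.
by rewrite inE => /eqP <-; exists i.
Qed.

Lemma Mlab_empty (a : univ A) (x : cons A) (l : label s) : tagged l == set0 ->
  (Mlab a x == l) = (csym x == tag l) && (a \notin (ctup x : seq _)).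
Proof.
rewrite mem_ctupE negbK => l0; apply/eqP/andP => [e|[/eqP xl x0]].
  by subst l; rewrite eqxx.
exact: label_eq_empty.
Qed.

Lemma count_nbrs_inl (a : univ A) (P : pred (label s * degT s j)) :
  count P (nbrs d (inl a)) =
  #|[set x | (a \in (ctup x : seq _)) && P (Mlab a x, d (inr x))]|.
Proof.
rewrite /= count_map count_filter -sum1_count -sum1dep_card big_enum_cond /=.
by apply: eq_bigl => x; rewrite andbC.
Qed.

Lemma count_nbrs_inr (x : cons A) (P : pred (label s * degT s j)) :
  count P (nbrs d (inr x)) =
  #|[set a | (a \in (ctup x : seq _)) && P (Mlab a x, d (inl a))]|.
Proof.
rewrite /= count_map count_filter -sum1_count -sum1dep_card big_enum_cond /=.
by apply: eq_bigl => a; rewrite andbC.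
Qed.

Lemma count_mem_nbrs_inl (a : univ A) l t :
  count_mem (l, t) (nbrs d (inl a)) =
  (tagged l != set0) * cons_count (fun x => d (inr x)) a l t.
Proof.
rewrite count_nbrs_inl -card_set_andl; apply: eq_card => x; rewrite !inE xpair_eqE mem_ctupE.
by case: (Mlab a x =P l) => [->|]; rewrite ?andbF // andbT andbC.
Qed.

Lemma count_mem_nbrs_inr (x : cons A) l t :
  count_mem (l, t) (nbrs d (inr x)) =
  (tagged l != set0) * elt_count (fun a => d (inl a)) x l t.
Proof.
rewrite count_nbrs_inr -card_set_andl; apply: eq_card => a; rewrite !inE xpair_eqE mem_ctupE.
by case: (Mlab a x =P l) => [->|]; rewrite ?andbF // andbT andbC.
Qed.

End Neighbourhoods.

Lemma deg_succ_count (s : signature) (A B : structure s) j v w :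
  deg A j.+1 v = deg B j.+1 w <->
  forall k, count_mem k (nbrs (deg A j) v) = count_mem k (nbrs (deg B j) w).
Proof.
split=> [/eq_seq_msetP/permP eq_nbrs k | eq_count]; first exact: eq_nbrs.
by apply/eq_seq_msetP/allP => k _ /=; rewrite eq_count.
Qed.

Lemma cons_count_classes (s : signature) (A : structure s) n m (p : univ A -> 'I_n)
    (q : cons A -> 'I_m) c d (T : eqType) (u : cons A -> T) (g : 'I_m -> T) :
  equitable_with p q c d -> (forall x, u x = g (q x)) ->
  forall a l t, cons_count u a l t = \sum_(k | g k == t) c l (p a) k.
Proof.
move=> [cE _] ug a l t.
rewrite /cons_count (eq_card (B := [set x | (Mlab a x == l) && (g (q x) == t)])).
  rewrite (card_set_partition q _ (fun k => g k == t)).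
  by apply: eq_bigr => k _; apply: cE.
by move=> x; rewrite !inE ug andbC.
Qed.

Lemma elt_count_classes (s : signature) (A : structure s) n m (p : univ A -> 'I_n)
    (q : cons A -> 'I_m) c d (T : eqType) (u : univ A -> T) (g : 'I_n -> T) :
  equitable_with p q c d -> (forall a, u a = g (p a)) ->
  forall x l t, elt_count u x l t = \sum_(i | g i == t) d l (q x) i.
Proof.
move=> [_ dE] ug x l t.
rewrite /elt_count (eq_card (B := [set a | (Mlab a x == l) && (g (p a) == t)])).
  rewrite (card_set_partition p _ (fun i => g i == t)).
  by apply: eq_bigr => i _; apply: dE.
by move=> a; rewrite !inE ug andbC.
Qed.

Section EquitableDegrees.
Variables (s : signature) (A1 A2 : structure s) (n m : nat).
Variables (p1 : univ A1 -> 'I_n) (q1 : cons A1 -> 'I_m).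
Variables (p2 : univ A2 -> 'I_n) (q2 : cons A2 -> 'I_m).
Variables (c : label s -> 'I_n -> 'I_m -> nat) (d : label s -> 'I_m -> 'I_n -> nat).
Hypotheses (eq1 : equitable_with p1 q1 c d) (eq2 : equitable_with p2 q2 c d).
Hypotheses (sp1 : is_partition p1) (sq1 : is_partition q1).
Hypotheses (sp2 : is_partition p2) (sq2 : is_partition q2).

Lemma equitable_deg j :
  (forall a b, p1 a = p2 b -> deg A1 j (inl a) = deg A2 j (inl b)) /\
  (forall x y, q1 x = q2 y -> deg A1 j (inr x) = deg A2 j (inr y)).
Proof.
elim: j => [|j [IHp IHq]] //; split=> [a b ab | x y xy]; apply/deg_succ_count => -[l t].
  have [g [g1 g2]] := factor_through sq1 sq2 IHq.
  by rewrite !count_mem_nbrs_inl (cons_count_classes eq1 g1) (cons_count_classes eq2 g2) ab.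
have [g [g1 g2]] := factor_through sp1 sp2 IHp.
by rewrite !count_mem_nbrs_inr (elt_count_classes eq1 g1) (elt_count_classes eq2 g2) xy.
Qed.

End EquitableDegrees.

Lemma cond2_of_cond3 (s : signature) (A B : structure s) : cond3 A B -> cond2 A B.
Proof.
case=> n [m [pA [qA [pB [qB [c [d [sA [sqA [sB [sqB [eqA [eqB [fibP fibQ]]]]]]]]]]]]]].
have [fu [gu fuK guK] pfu] := fibre_bij fibP.
have [fc [gc fcK gcK] qfc] := fibre_bij fibQ.
exists (fun v : vert A => match v with inl a => inl (fu a) | inr x => inr (fc x) end).
split.
  exists (fun w : vert B => match w with inl b => inl (gu b) | inr y => inr (gc y) end).
    by case=> [a|x]; rewrite ?fuK ?fcK.
  by case=> [b|y]; rewrite ?guK ?gcK.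
move=> [a|x] j; have [degP degQ] := equitable_deg eqA eqB sA sqA sB sqB j.
  by rewrite (degP a (fu a)).
by rewrite (degQ x (fc x)).
Qed.

Section Depths.
Variable s : signature.

(* An element has only constraints as neighbours, whereas a constraint has an element
   neighbour because arities are positive: [deg 0] is read off [deg 1]. *)
Local Unset Implicit Arguments.
Fixpoint deg_proj (j : nat) : degT s j.+1 -> degT s j :=
  match j return degT s j.+1 -> degT s j with
  | 0 => fun m => ~~ has snd (enum_mset m)
  | j'.+1 => fun m => seq_mset [seq (k.1, deg_proj j' k.2) | k <- enum_mset m]
  end.
Local Set Implicit Arguments.

Lemma has_elt_nbr (A : structure s) (x : cons A) : has snd (nbrs (deg A 0) (inr x)).
Proof.
rewrite /= has_map; apply/hasP; exists (tnth (ctup x) (Ordinal (ar_pos (csym x)))) => //.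
by rewrite mem_filter mem_tnth mem_enum.
Qed.

Lemma deg_projE (A : structure s) j v : deg_proj j (deg A j.+1 v) = deg A j v.
Proof.
elim: j v => [|j IH] v.
  rewrite /= (perm_has _ (perm_eq_seq_mset _)).
  by case: v => [a|x]; [rewrite /= has_map; apply/hasPn | rewrite has_elt_nbr].
rewrite [LHS]/= (eq_seq_msetP _ _ (perm_map _ (perm_eq_seq_mset _))) [RHS]/=.
congr seq_mset; case: v => [a|x]; rewrite /nbrs -map_comp; apply: eq_map => y /=.
  by rewrite -(IH (inr y)).
by rewrite -(IH (inl y)).
Qed.

Lemma deg_eq_le (A B : structure s) v w j k :
  j <= k -> deg A k v = deg B k w -> deg A j v = deg B j w.
Proof.
move=> /subnK <-; elim: (k - j) => [|i IH] // eq_deg; apply: IH.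
by rewrite -[LHS]deg_projE -[RHS]deg_projE eq_deg.
Qed.

Lemma csym_deg1 (A B : structure s) (x : cons A) (y : cons B) :
  deg A 1 (inr x) = deg B 1 (inr y) -> csym x = csym y.
Proof.
move=> /eq_seq_msetP eq_nbrs; have /hasP[[l t] lx _] := has_elt_nbr x.
have /mapP[a _ [la _]] := lx; rewrite (perm_mem eq_nbrs) in lx.
have /mapP[b _ [lb _]] := lx.
by rewrite -[csym x]/(tag (Mlab a x)) -[csym y]/(tag (Mlab b y)) -la -lb.
Qed.

Lemma deg_stable (A : structure s) :
  exists J, forall v w : vert A, deg A J v = deg A J w -> forall j, deg A j v = deg A j w.
Proof.
have witness (vw : vert A * vert A) :
    exists j, deg A j vw.1 = deg A j vw.2 -> forall k, deg A k vw.1 = deg A k vw.2.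
  have [all_eq|/not_all_ex_not[k neq_k]] := classic (forall k, deg A k vw.1 = deg A k vw.2).
    by exists 0 => _.
  by exists k => /neq_k.
have [wj wjP] := fin_all_exists witness.
exists (\max_vw wj vw) => v w eqJ; apply: (wjP (v, w)).
exact: deg_eq_le (leq_bigmax (v, w)) eqJ.
Qed.

Lemma cons_count_deg_succ (A B : structure s) J (a : univ A) (b : univ B) :
  eq_fibre_card (fun x => (deg A J (inr x), csym x)) (fun y => (deg B J (inr y), csym y)) ->
  deg A J.+1 (inl a) = deg B J.+1 (inl b) ->
  forall l t, cons_count (fun x => deg A J (inr x)) a l t =
              cons_count (fun y => deg B J (inr y)) b l t.
Proof.
move=> fib eqJ1 l t; have /deg_succ_count eq_mem := eqJ1.
have /eq_seq_msetP/permP eq_nbrs := eqJ1.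
have [l0|l_inc] := boolP (tagged l == set0); last first.
  by have := eq_mem (l, t); rewrite !count_mem_nbrs_inl l_inc !mul1n.
(* Non-incident constraints of a given key are all constraints of that key and
   symbol minus the incident ones, which the neighbour multiset counts. *)
have count_empty (C : structure s) (c : univ C) : cons_count (fun x => deg C J (inr x)) c l t =
    #|[set x | (deg C J (inr x), csym x) == (t, tag l)]|
    - count [pred k | (k.2, tag k.1) == (t, tag l)] (nbrs (deg C J) (inl c)).
  rewrite /cons_count (eq_card (B := [set x | ((deg C J (inr x), csym x) == (t, tag l))
                                            && ~~ (c \in (ctup x : seq _))])).
    by rewrite card_set_andN count_nbrs_inl; congr (_ - _); apply: eq_card => x; rewrite !inE andbC.
  by move=> x; rewrite !inE (Mlab_empty _ _ l0) xpair_eqE andbA.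
by rewrite !count_empty fib eq_nbrs.
Qed.

Lemma elt_count_deg_succ (A B : structure s) J (x : cons A) (y : cons B) :
  eq_fibre_card (fun a => deg A J (inl a)) (fun b => deg B J (inl b)) ->
  deg A J.+1 (inr x) = deg B J.+1 (inr y) ->
  forall l t, elt_count (fun a => deg A J (inl a)) x l t =
              elt_count (fun b => deg B J (inl b)) y l t.
Proof.
move=> fib eqJ1 l t; have /deg_succ_count eq_mem := eqJ1.
have /eq_seq_msetP/permP eq_nbrs := eqJ1.
have sym_xy := csym_deg1 (deg_eq_le (j := 1) (ltn0Sn J) eqJ1).
have [l0|l_inc] := boolP (tagged l == set0); last first.
  by have := eq_mem (l, t); rewrite !count_mem_nbrs_inr l_inc !mul1n.
have count_empty (C : structure s) (z : cons C) : elt_count (fun a => deg C J (inl a)) z l t =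
    (csym z == tag l) * (#|[set a | deg C J (inl a) == t]|
                         - count [pred k | k.2 == t] (nbrs (deg C J) (inr z))).
  rewrite /elt_count (eq_card (B := [set a | (csym z == tag l)
                          && ((deg C J (inl a) == t) && ~~ (a \in (ctup z : seq _)))])).
    rewrite card_set_andl card_set_andN count_nbrs_inr.
    by congr (_ * (_ - _)); apply: eq_card => a; rewrite !inE andbC.
  by move=> a; rewrite !inE (Mlab_empty _ _ l0) andbCA.
by rewrite !count_empty sym_xy fib eq_nbrs.
Qed.

End Depths.

Definition is_left (X Y : Type) (z : X + Y) : bool := if z is inl _ then true else false.

Lemma left_preserving_split (X1 X2 Y1 Y2 : finType) (h : X1 + X2 -> Y1 + Y2) :
  (forall z, is_left (h z) = is_left z) ->
  exists h1 : X1 -> Y1, exists h2 : X2 -> Y2,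
    (forall x, h (inl x) = inl (h1 x)) /\ (forall x, h (inr x) = inr (h2 x)).
Proof.
move=> h_left.
have /fin_all_exists[h1 h1E] : forall x, exists y, h (inl x) = inl y.
  move=> x; have := h_left (inl x).
  by case: (h (inl x)) => [y|//] _; exists y.
have /fin_all_exists[h2 h2E] : forall x, exists y, h (inr x) = inr y.
  move=> x; have := h_left (inr x).
  by case: (h (inr x)) => [//|y] _; exists y.
by exists h1, h2.
Qed.

Lemma bij_sum_split (X1 X2 Y1 Y2 : finType) (f : X1 + X2 -> Y1 + Y2) :
  bijective f -> (forall z, is_left (f z) = is_left z) ->
  exists f1 : X1 -> Y1, exists f2 : X2 -> Y2,
    [/\ bijective f1, bijective f2, forall x, f (inl x) = inl (f1 x)
      & forall x, f (inr x) = inr (f2 x)].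
Proof.
move=> [g fK gK] f_left; have g_left w : is_left (g w) = is_left w by rewrite -f_left gK.
have [f1 [f2 [f1E f2E]]] := left_preserving_split f_left.
have [g1 [g2 [g1E g2E]]] := left_preserving_split g_left.
exists f1, f2; split=> //.
  by exists g1 => x; [have := fK (inl x) | have := gK (inl x)]; rewrite ?f1E ?g1E ?f1E => -[].
by exists g2 => x; [have := fK (inr x) | have := gK (inr x)]; rewrite ?f2E ?g2E ?f2E => -[].
Qed.

Lemma cond3_of_cond2 (s : signature) (A B : structure s) : cond2 A B -> cond3 A B.
Proof.
case=> f [f_bij f_deg].
have [fu [fc [fu_bij fc_bij fuE fcE]]] := bij_sum_split f_bij (fun v => f_deg v 0).
have deg_fu a j : deg B j (inl (fu a)) = deg A j (inl a) by rewrite -fuE f_deg.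
have deg_fc x j : deg B j (inr (fc x)) = deg A j (inr x) by rewrite -fcE f_deg.
have [[gu _ guK] [gc _ gcK]] := (fu_bij, fc_bij).
(* Equal depth-[J] degrees of [a] and [b] transfer to [a] and [gu b] inside [A],
   where depth [J] is stable, so [a] and [b] also agree at depth [J.+1]. *)
have [J stableJ] := deg_stable A.
apply: (cond3_of_keys (pA := fun a => deg A J (inl a)) (qA := fun x => deg A J (inr x))
                      (pB := fun b => deg B J (inl b)) (qB := fun y => deg B J (inr y))).
- exact: bij_eq_fibre_card fu_bij (fun a => deg_fu a J).
- exact: bij_eq_fibre_card fc_bij (fun x => deg_fc x J).
- move=> a b abJ; apply: cons_count_deg_succ.
    by apply: (bij_eq_fibre_card fc_bij) => x; rewrite deg_fc (csym_deg1 (deg_fc x 1)).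
  by rewrite -(guK b) deg_fu; apply: stableJ; rewrite -(deg_fu (gu b) J) guK.
- move=> x y xyJ; apply: elt_count_deg_succ.
    exact: bij_eq_fibre_card fu_bij (fun a => deg_fu a J).
  by rewrite -(gcK y) deg_fc; apply: stableJ; rewrite -(deg_fc (gc y) J) gcK.
Qed.

Lemma sum_ind_mulr (T : finType) (t : T) (g : T -> R) : (\sum_u (t == u)%:R * g u = g t)%R.
Proof.
rewrite (bigD1 t) //= eqxx mul1r big1 ?addr0 // => u.
by rewrite eq_sym => /negPf ->; rewrite mul0r.
Qed.

(** * Graphs *)

Section GraphSignature.
Variables (s : signature) (E : sym s).
Hypotheses (symE : forall r : sym s, r = E) (ar2 : forall r : sym s, ar r = 2).
Local Open Scope ring_scope.

Lemma ar_gt1 (r : sym s) : (1 < ar r)%N. Proof. by rewrite ar2. Qed.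
Definition pos0 (r : sym s) : 'I_(ar r) := Ordinal (ar_pos r).
Definition pos1 (r : sym s) : 'I_(ar r) := Ordinal (ar_gt1 r).

Lemma ord_ar2 (r : sym s) (i : 'I_(ar r)) : i = pos0 r \/ i = pos1 r.
Proof.
case: i => [[|[|k]] lt_k]; [left | right | suff : (k.+2 < 2)%N by []]; last by rewrite -(ar2 r).
all: exact: val_inj.
Qed.

Lemma pos01 (r : sym s) : (pos0 r == pos1 r) = false.
Proof. by rewrite -val_eqE. Qed.

Definition glab (b0 b1 : bool) : label s :=
  Tagged (fun r => {set 'I_(ar r)})
    [set i : 'I_(ar E) | (i == pos0 E) && b0 || (i == pos1 E) && b1].

Definition lab_src := glab true false.
Definition lab_dst := glab false true.
Definition lab_none := glab false false.

Lemma glab_eq b0 b1 c0 c1 : (glab b0 b1 == glab c0 c1) = (b0 == c0) && (b1 == c1).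
Proof.
rewrite /glab eq_Tagged /=; apply/eqP/andP => [e|[/eqP-> /eqP->] //].
have := congr1 (fun S : {set _} => pos0 E \in S) e.
have := congr1 (fun S : {set _} => pos1 E \in S) e.
by rewrite /= !inE !eqxx pos01 eq_sym pos01 /= !orbF => -> ->; rewrite !eqxx.
Qed.

Section Graph.
Variable A : structure s.
Hypothesis gA : is_graph A.

Definition src (x : cons A) : univ A := tnth (ctup x) (pos0 _).
Definition dst (x : cons A) : univ A := tnth (ctup x) (pos1 _).

Lemma ctup_graph x : val (ctup x) = [:: src x; dst x].
Proof.
have size2 : size (ctup x) = 2 by rewrite size_tuple ar2.
apply: (@eq_from_nth _ (src x)); rewrite size2 // => -[|[|i]] //= _.
  exact: esym (tnth_nth (src x) (ctup x) (pos0 _)).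
exact: esym (tnth_nth (src x) (ctup x) (pos1 _)).
Qed.

Lemma src_neq_dst x : src x != dst x.
Proof.
have := (gA.2 (csym x)).2.1 (ctup x) (valP x).
by rewrite ctup_graph /= inE andbT.
Qed.

Lemma cons_graph_inj x x' : src x = src x' -> dst x = dst x' -> x = x'.
Proof.
move=> eq_src eq_dst; have := ctup_graph x; rewrite eq_src eq_dst -ctup_graph.
case: x x' {eq_src eq_dst} => [[r t] tr] [[r' t'] tr'] /= eq_t.
have er := etrans (symE r) (esym (symE r')); subst r'.
have et : t = t' by apply: val_inj.
by subst t'; congr exist; apply: bool_irrelevance.
Qed.

Lemma Mlab_graph a x : Mlab a x = glab (src x == a) (dst x == a).
Proof.
rewrite /Mlab /glab -(symE (csym x)); congr Tagged; apply/setP => i; rewrite !inE /src /dst.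
by case: (ord_ar2 i) => ->; rewrite eqxx ?pos01 1?eq_sym ?pos01 ?orbF.
Qed.

Lemma Ml_graph l a x : Ml l a x =
  (l == lab_src)%:R * (src x == a)%:R + (l == lab_dst)%:R * (dst x == a)%:R
  + (l == lab_none)%:R * (1 - (src x == a)%:R - (dst x == a)%:R).
Proof.
rewrite /Ml Mlab_graph eq_sym /lab_src /lab_dst /lab_none.
case sa: (src x == a); case da: (dst x == a);
  rewrite /= ?(mulr1, mulr0, subrr, subr0, addr0, add0r) //.
by case/negP: (src_neq_dst x); rewrite (eqP sa) (eqP da).
Qed.

Lemma sum_Ml_cons (w : cons A -> R) a l : \sum_x Ml l a x * w x =
  (l == lab_src)%:R * (\sum_x (src x == a)%:R * w x)
  + (l == lab_dst)%:R * (\sum_x (dst x == a)%:R * w x)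
  + (l == lab_none)%:R * (\sum_x w x - \sum_x (src x == a)%:R * w x - \sum_x (dst x == a)%:R * w x).
Proof.
rewrite -!sumrB !mulr_sumr -!big_split; apply: eq_bigr => x _.
by rewrite Ml_graph /=; ring.
Qed.

Lemma sum_Ml_elt (w : univ A -> R) x l : \sum_a Ml l a x * w a =
  (l == lab_src)%:R * w (src x) + (l == lab_dst)%:R * w (dst x)
  + (l == lab_none)%:R * (\sum_a w a - w (src x) - w (dst x)).
Proof.
rewrite -(sum_ind_mulr (src x) w) -(sum_ind_mulr (dst x) w) -!sumrB !mulr_sumr -!big_split.
by apply: eq_bigr => a _; rewrite Ml_graph /=; ring.
Qed.

Lemma adj_edge a a' : adj a a' = #|[set x | (src x == a) && (dst x == a')]|%:R.
Proof.
rewrite /adj; congr (_%:R); apply/esym.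
case: existsP => [[r /existsP[t /andP[tr /eqP ta]]]|no_edge].
  pose x : cons A := exist _ (Tagged (fun r => (ar r).-tuple (univ A)) t) tr.
  have [sx dx] : src x = a /\ dst x = a'.
    by have := ctup_graph x; rewrite /ctup /= ta => -[].
  apply/eqP/cards1P; exists x; apply/setP => y; rewrite !inE.
  apply/andP/eqP => [[/eqP sy /eqP dy]|->]; last by rewrite sx dx.
  by apply: cons_graph_inj; rewrite ?sx ?dx.
apply/eqP; rewrite cards_eq0; apply/eqP/setP => y; rewrite !inE.
apply/negP => /andP[/eqP sy /eqP dy]; apply: no_edge; exists (csym y).
by apply/existsP; exists (ctup y); rewrite (valP y) ctup_graph sy dy /=.
Qed.

Lemma adj_sym (a a' : univ A) : adj a a' = adj a' a.
Proof.
suff flip (b b' : univ A) : [exists r, [exists t in Defs.rel A r, val t == [:: b; b']]] ->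
                           [exists r, [exists t in Defs.rel A r, val t == [:: b'; b]]].
  by rewrite /adj; congr ((nat_of_bool _)%:R); apply/idP/idP; apply: flip.
case/existsP => r /existsP[t /andP[tr /eqP tb]].
have /existsP[t' /andP[t'r /eqP t'b]] := (gA.2 r).2.2 t tr.
by apply/existsP; exists r; apply/existsP; exists t'; rewrite t'r t'b /= tb.
Qed.

Lemma sum_src (f : univ A -> R) a : \sum_x (src x == a)%:R * f (dst x) = appf (@adj _ A) f a.
Proof.
transitivity (\sum_x \sum_a' (src x == a)%:R * ((dst x == a')%:R * f a')).
  by apply: eq_bigr => x _; rewrite -mulr_sumr sum_ind_mulr.
rewrite exchange_big; apply: eq_bigr => a' _; rewrite adj_edge card_set_sum natr_sum mulr_suml.
by apply: eq_bigr => x _; rewrite -mulnb natrM mulrA.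
Qed.

Lemma sum_dst (f : univ A -> R) a : \sum_x (dst x == a)%:R * f (src x) = appf (@adj _ A) f a.
Proof.
transitivity (\sum_x \sum_a' (dst x == a)%:R * ((src x == a')%:R * f a')).
  by apply: eq_bigr => x _; rewrite -mulr_sumr sum_ind_mulr.
rewrite exchange_big; apply: eq_bigr => a' _.
rewrite adj_sym adj_edge card_set_sum natr_sum mulr_suml.
by apply: eq_bigr => x _; rewrite -mulnb natrM mulrCA mulrA.
Qed.

Definition edge_key (K : eqType) (p : univ A -> K) (x : cons A) : K * K := (p (src x), p (dst x)).

Lemma sum_src_key (K : eqType) (p : univ A -> K) a (k : K * K) :
  \sum_x (src x == a)%:R * (edge_key p x == k)%:R =
  (p a == k.1)%:R * appf (@adj _ A) (fibre_ind p k.2) a.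
Proof.
rewrite -sum_src mulr_sumr; apply: eq_bigr => x _; case: k => i j /=.
case: (src x =P a) => [<-|]; rewrite ?mul0r ?mulr0 //= !mul1r.
by rewrite /edge_key /fibre_ind xpair_eqE -mulnb natrM.
Qed.

Lemma sum_dst_key (K : eqType) (p : univ A -> K) a (k : K * K) :
  \sum_x (dst x == a)%:R * (edge_key p x == k)%:R =
  (p a == k.2)%:R * appf (@adj _ A) (fibre_ind p k.1) a.
Proof.
rewrite -sum_dst mulr_sumr; apply: eq_bigr => x _; case: k => i j /=.
case: (dst x =P a) => [<-|]; rewrite ?mul0r ?mulr0 //= !mul1r.
by rewrite /edge_key /fibre_ind xpair_eqE -mulnb natrM mulrC.
Qed.

Lemma edge_key_card (K : eqType) (p : univ A -> K) (k : K * K) :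
  #|[set x | edge_key p x == k]|%:R =
  \sum_a (p a == k.1)%:R * appf (@adj _ A) (fibre_ind p k.2) a :> R.
Proof.
rewrite card_set_sum natr_sum.
transitivity (\sum_x \sum_a (src x == a)%:R * (edge_key p x == k)%:R : R).
  by apply: eq_bigr => x _; rewrite sum_ind_mulr.
by rewrite exchange_big; apply: eq_bigr => a _; rewrite sum_src_key.
Qed.

Lemma Ml_src a x : Ml lab_src a x = (src x == a)%:R.
Proof. by rewrite Ml_graph !glab_eq /= mul1r !mul0r !addr0. Qed.

Lemma Ml_dst a x : Ml lab_dst a x = (dst x == a)%:R.
Proof. by rewrite Ml_graph !glab_eq /= mul1r !mul0r add0r addr0. Qed.

Lemma adj_Ml : @adj _ A =2 mulf (Ml lab_src) (trf (Ml lab_dst)).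
Proof.
move=> a a'; rewrite adj_edge card_set_sum natr_sum; apply: eq_bigr => x _.
by rewrite /trf Ml_src Ml_dst -natrM mulnb.
Qed.

End Graph.

Lemma cond4_of_cond1 (A B : structure s) : is_graph A -> is_graph B -> cond1 A B -> cond4 A B.
Proof.
move=> gA gB [P [Q [dsP [dsQ PQ]]]]; exists P; split=> // b a.
have [PQ_src _] : intertwines P Q (Ml lab_src) (Ml lab_src) := PQ lab_src.
have [PQ_dst _] : intertwines Q P (trf (Ml lab_dst)) (trf (Ml lab_dst)) :=
  intertwines_tr (PQ lab_dst).
rewrite -[LHS]/(mulf P (@adj _ A) b a) -[RHS]/(mulf (@adj _ B) P b a).
rewrite (eq_mulfr _ (adj_Ml gA)) (eq_mulfl _ (adj_Ml gB)) -mulfA (eq_mulfl _ PQ_src).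
by rewrite mulfA (eq_mulfr _ PQ_dst) -mulfA.
Qed.

Lemma cond3_of_cond4 (A B : structure s) : is_graph A -> is_graph B -> cond4 A B -> cond3 A B.
Proof.
move=> gA gB [P [dsP PN]].
have PNN : intertwines P P (@adj _ A) (@adj _ B).
  have PN' : mulf P (@adj _ A) =2 mulf (@adj _ B) P := PN.
  split=> // a b; rewrite mulf_trC (eq_mulfr _ (fun x y => adj_sym gA y x)) PN'.
  by rewrite mulf_trC (eq_mulfr _ (fun x y => adj_sym gB y x)).
have nbr_eq i a b : colcomp P a = rowcomp P b ->
    appf (@adj _ A) (fibre_ind (colcomp P) i) a = appf (@adj _ B) (fibre_ind (rowcomp P) i) b.
  move=> ab; exact (coupled_comp_const dsP (intertwines_coupled PNN (comp_coupled dsP i)) ab).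
have edge_fib : eq_fibre_card (edge_key (colcomp P)) (edge_key (rowcomp P)).
  move=> k; apply/eqP; rewrite -(eqr_nat R) !edge_key_card; apply/eqP.
  apply: (coupled_sum dsP); apply: (ds_coupled_of_support dsP) => a b /comp_support ab.
  by rewrite ab (nbr_eq _ _ _ ab).
apply: (cond3_of_keys (comp_fibre_card dsP) edge_fib) => [a b ab l k | x y xy l i].
  apply/eqP; rewrite -(eqr_nat R) !cons_countE (sum_Ml_cons gA) (sum_Ml_cons gB).
  rewrite !sum_src_key (sum_dst_key gA) (sum_dst_key gB).
  by rewrite -!natr_sum -!card_set_sum edge_fib ab !(nbr_eq _ _ _ ab).
apply/eqP; rewrite -(eqr_nat R) !elt_countE (sum_Ml_elt gA) (sum_Ml_elt gB).
case: xy => src_xy dst_xy.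
by rewrite -!natr_sum -!card_set_sum (comp_fibre_card dsP) src_xy dst_xy.
Qed.

End GraphSignature.

Lemma is_graph_sym (s : signature) (A : structure s) :
  is_graph A -> exists E : sym s, forall r, r = E.
Proof. by case=> /eqP/card1P[E symE] _; exists E => r; apply/eqP; rewrite -[_ == _]symE. Qed.

Theorem theorem3p2 (s : signature) (A B : structure s) :
  (cond1 A B <-> cond2 A B) /\ (cond2 A B <-> cond3 A B) /\
  (is_graph A -> is_graph B -> (cond4 A B <-> cond1 A B)).
Proof.
split; first by split=> [/cond3_of_cond1/cond2_of_cond3 | /cond3_of_cond2/cond1_of_cond3].
split; first by split; [apply: cond3_of_cond2 | apply: cond2_of_cond3].
move=> gA gB; have [E symE] := is_graph_sym gA; have ar2 r := (gA.2 r).1.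
by split=> [/(cond3_of_cond4 symE ar2 gA gB)/cond1_of_cond3 | /(cond4_of_cond1 symE ar2 gA gB)].
Qed.
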